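(* For every integer $n$ with $1\le n\le 10$, \[ s(P_n)=\max_{0\le r\le n}|Q^{(r)}(P_n)|. \]
   Context: $Q(P_n)$ is the family of subsets of $[n]=\{1,\dots,n\}$ containing no two consecutive integers, and $Q^{(r)}(P_n)$ its members of size $r$. $s(P_n)$ is the maximum size of an antichain (a subfamily in which no member is a proper subset of another) in $Q(P_n)$. *)

From mathcomp Require Import all_boot.
Set Implicit Arguments. Unset Strict Implicit. Unset Printing Implicit Defensive.

(* [n] = {1..n} is represented by 'I_n, element i : 'I_n standing for i+1. *)

Definition sparse (n : nat) (A : {set 'I_n}) : bool :=
  [forall i : 'I_n, forall j : 'I_n, (i \in A) && (j \in A) ==> (val j != (val i).+1)].

Definition QP (n : nat) : {set {set 'I_n}} := [set A | sparse A].

Definition QPr (n r : nat) : {set {set 'I_n}} := [set A in QP n | #|A| == r].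

Definition antichainQ (n : nat) (F : {set {set 'I_n}}) : Prop :=
  F \subset QP n /\ forall A B, A \in F -> B \in F -> ~~ (A \proper B).

Definition is_sP (n m : nat) : Prop :=
  (exists F : {set {set 'I_n}}, antichainQ F /\ #|F| = m) /\ (forall F : {set {set 'I_n}}, antichainQ F -> #|F| <= m).

From mathcomp Require Import all_boot.
Set Implicit Arguments. Unset Strict Implicit. Unset Printing Implicit Defensive.

(* For n <= 10, Q(P_n) can be partitioned into as many chains as its largest
   level has members.  An antichain meets each chain at most once, so it is no
   larger than that level, which is itself an antichain.  The chains are built
   level by level, extending them along a maximum matching (Kuhn's augmenting
   paths) between consecutive levels; subsets of [n] are encoded as boolean
   vectors and the resulting chain cover is verified by computation. *)

Lemma QPr_antichain n r : antichainQ (QPr n r).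
Proof.
split; first by apply/subsetP => A; rewrite inE => /andP [].
move=> A B; rewrite !inE => /andP [_ /eqP cardA] /andP [_ /eqP cardB].
by apply/negP => /proper_card; rewrite cardA cardB ltnn.
Qed.

Lemma card_antichain_le_chains (T : finType) (F : {set {set T}}) (k : nat)
    (g : {set T} -> nat) :
  {in F &, forall A B : {set T}, ~~ (A \proper B)} ->
  {in F, forall A, g A < k} ->
  {in F &, forall A B : {set T}, g A = g B -> (A \subset B) || (B \subset A)} ->
  #|F| <= k.
Proof.
move=> antiF g_lt g_chain.
have g_inj : {in F &, injective g}.
  move=> A B FA FB /(g_chain A B FA FB) /orP [] AB.
    by apply/eqP; rewrite eqEproper AB antiF.
  by apply/esym/eqP; rewrite eqEproper AB antiF.
rewrite cardE -(size_map g) -[k](size_iota 0).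
apply: uniq_leq_size => [|_ /mapP [A FA ->]].
  by rewrite map_inj_in_uniq ?enum_uniq // => A B; rewrite !mem_enum; apply: g_inj.
by rewrite mem_iota g_lt // -mem_enum.
Qed.

Lemma is_sP_max_level n r k :
  r <= n -> k <= #|QPr n r| -> (forall F : {set {set 'I_n}}, antichainQ F -> #|F| <= k) ->
  is_sP n (\max_(r < n.+1) #|QPr n r|).
Proof.
move=> le_rn le_k_r antichain_le.
have max_le : \max_(r < n.+1) #|QPr n r| <= k.
  by apply/bigmax_leqP => i _; apply: antichain_le; apply: QPr_antichain.
have le_max : #|QPr n r| <= \max_(r < n.+1) #|QPr n r|.
  exact: (@leq_bigmax _ (fun i : 'I_n.+1 => #|QPr n i|) (Ordinal (le_rn : r < n.+1))).
have k_max : k = \max_(r < n.+1) #|QPr n r|.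
  by apply/eqP; rewrite eqn_leq max_le (leq_trans le_k_r).
split=> [|F /antichain_le]; last by rewrite k_max.
exists (QPr n r); split; first exact: QPr_antichain.
by apply/eqP; rewrite eqn_leq le_max -k_max.
Qed.

Fixpoint bitvecs (n : nat) : seq (seq bool) :=
  if n is n'.+1 then [seq b :: s | b <- [:: false; true], s <- bitvecs n'] else [:: [::]].

Lemma mem_bitvecs n s : (s \in bitvecs n) = (size s == n).
Proof.
elim: n s => [|n IHn] [|b s] //=; rewrite cats0 mem_cat.
  by apply/orP => -[] /mapP [].
rewrite eqSS -IHn; apply/orP/idP => [[] /mapP [t bt [_ ->]] // | bs].
by case: b; [right | left]; apply: map_f.
Qed.

Lemma bitvecs_uniq n : uniq (bitvecs n).
Proof.
elim: n => //= n IHn; have cons_inj (b : bool) : injective (cons b) by move=> s t [].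
rewrite cats0 cat_uniq !map_inj_uniq //; apply/and3P; split=> //.
by apply/hasPn => _ /mapP [s _ ->]; apply/mapP => -[t _].
Qed.

Definition sparseb (s : seq bool) : bool :=
  all (fun k => ~~ (nth false s k && nth false s k.+1)) (iota 0 (size s)).

Definition subb (s t : seq bool) : bool :=
  all (fun k => nth false s k ==> nth false t k) (iota 0 (size s)).

Definition vec n (A : {set 'I_n}) : seq bool := [seq i \in A | i <- enum 'I_n].

Lemma size_vec n (A : {set 'I_n}) : size (vec A) = n.
Proof. by rewrite size_map size_enum_ord. Qed.

Lemma nth_vec n (A : {set 'I_n}) (i : 'I_n) : nth false (vec A) i = (i \in A).
Proof. by rewrite (nth_map i) ?size_enum_ord // nth_ord_enum. Qed.

Lemma nth_vec_default n (A : {set 'I_n}) k : n <= k -> nth false (vec A) k = false.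
Proof. by move=> le_nk; rewrite nth_default ?size_vec. Qed.

Lemma vec_inj n : injective (@vec n).
Proof. by move=> A B eqAB; apply/setP => i; rewrite -!nth_vec eqAB. Qed.

Lemma sparseb_vec n (A : {set 'I_n}) : sparseb (vec A) = sparse A.
Proof.
apply/allP/forallP => [sparseA i | sparseA k].
  apply/forall_inP => j /andP [Ai Aj]; apply/eqP => ji.
  by have := sparseA i; rewrite mem_iota size_vec ltn_ord -ji !nth_vec Ai Aj => /(_ isT).
rewrite mem_iota size_vec /= => lt_kn.
have [lt_k1n | ?] := ltnP k.+1 n; last by rewrite (@nth_vec_default _ _ k.+1) ?andbF.
rewrite (nth_vec A (Ordinal lt_kn)) (nth_vec A (Ordinal lt_k1n)).
by apply/negP => Ak; have /forallP/(_ (Ordinal lt_k1n)) := sparseA (Ordinal lt_kn); rewrite Ak eqxx.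
Qed.

Lemma subb_vec n (A B : {set 'I_n}) : subb (vec A) (vec B) = (A \subset B).
Proof.
apply/allP/subsetP => [subAB i Ai | subAB k].
  by have := subAB i; rewrite mem_iota size_vec ltn_ord !nth_vec Ai => /(_ isT).
rewrite mem_iota size_vec /= => lt_kn.
by rewrite (nth_vec A (Ordinal lt_kn)) (nth_vec B (Ordinal lt_kn)); apply/implyP/subAB.
Qed.

Lemma count_vec n (A : {set 'I_n}) : count id (vec A) = #|A|.
Proof. by rewrite count_map cardE size_filter enumT. Qed.

Lemma perm_bitvecs_vec n : perm_eq (bitvecs n) [seq vec A | A : {set 'I_n}].
Proof.
apply: uniq_perm; first exact: bitvecs_uniq.
  by rewrite map_inj_uniq ?enum_uniq //; apply: vec_inj.
move=> s; rewrite mem_bitvecs; apply/eqP/mapP => [size_s | [A _ ->]]; last exact: size_vec.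
exists [set i : 'I_n | nth false s i]; rewrite ?mem_enum //.
apply: (@eq_from_nth _ false) => [|k]; rewrite ?size_vec // size_s => lt_kn.
by rewrite (nth_vec _ (Ordinal lt_kn)) inE.
Qed.

Definition level_vec r (s : seq bool) : bool := sparseb s && (count id s == r).

Lemma card_QPr n r : #|QPr n r| = count (level_vec r) (bitvecs n).
Proof.
rewrite (permP (perm_bitvecs_vec n)) count_map cardE size_filter enumT.
by apply: eq_count => A; rewrite /= /level_vec sparseb_vec count_vec !inE.
Qed.

Definition chain_coverb n (cs : seq (seq (seq bool))) : bool :=
  all (fun s => sparseb s ==> has (fun c => s \in c) cs) (bitvecs n) &&
  all (fun c => all (fun x => all (fun y => subb x y || subb y x) c) c) cs.

Lemma card_antichain_le_cover n cs (F : {set {set 'I_n}}) :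
  chain_coverb n cs -> antichainQ F -> #|F| <= size cs.
Proof.
case/andP => /allP covered /allP chains [subF antiF].
pose g (A : {set 'I_n}) := find (fun c => vec A \in c) cs.
have has_vec A : A \in F -> has (fun c => vec A \in c) cs.
  move=> FA; have := covered (vec A); rewrite mem_bitvecs size_vec eqxx sparseb_vec.
  by move: (subsetP subF A FA); rewrite inE => -> /(_ isT).
apply: (@card_antichain_le_chains _ _ _ g) => [A B FA FB | A FA | A B FA FB gAB].
- exact: antiF.
- by rewrite -has_find has_vec.
have cA := nth_find [::] (has_vec A FA); have cB := nth_find [::] (has_vec B FB).
rewrite -/(g A) in cA; rewrite -/(g B) -gAB in cB.
have chain_gA : nth [::] cs (g A) \in cs by rewrite mem_nth // -has_find has_vec.
by have /allP/(_ _ cA)/allP/(_ _ cB) := chains _ chain_gA; rewrite !subb_vec.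
Qed.

Section ChainOracle.
Variables (T : eqType) (below : rel T) (tops : seq T).

(* [mate] lists, for each of the [tops], the element of the next level it is
   matched to. *)
Fixpoint augment (fuel : nat) (v : T) (seen : seq nat) (mate : seq (option T)) :
    seq nat * option (seq (option T)) :=
  if fuel is fuel'.+1 then
    let fix scan (idx seen : seq nat) :=
      if idx is i :: idx' then
        if (i \in seen) || ~~ below (nth v tops i) v then scan idx' seen else
        let seen := i :: seen in
        if nth None mate i is Some w then
          let: (seen, res) := augment fuel' w seen mate in
          if res is Some mate' then (seen, Some (set_nth None mate' i (Some v)))
          else scan idx' seen
        else (seen, Some (set_nth None mate i (Some v)))
      else (seen, None)
    in scan (iota 0 (size tops)) seen
  else (seen, None).

Definition max_matching (next : seq T) : seq (option T) :=
  foldl (fun mate v => odflt mate (augment (size next) v [::] mate).2)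
        (nseq (size tops) None) next.

End ChainOracle.

(* Chains are stored top element first.  Nothing is proved about this
   construction: only its output is used, through [chain_coverb]. *)
Definition extend_chains (st : seq (seq (seq bool)) * seq (seq (seq bool)))
    (next : seq (seq bool)) :=
  let: (closed, open) := st in
  let mate := max_matching subb (map (head [::]) open) next in
  let paired := zip open mate in
  (closed ++ [seq p.1 | p <- paired & p.2 == None],
   pmap (fun p => omap (cons^~ p.1) p.2) paired ++
   [seq [:: v] | v <- next & Some v \notin mate]).

Definition level_vecs n r := [seq s <- bitvecs n | level_vec r s].

Definition chain_cover n : seq (seq (seq bool)) :=
  let: (closed, open) := foldl extend_chains ([::], [seq [:: s] | s <- level_vecs n 0])
                                [seq level_vecs n r | r <- iota 1 n] in
  closed ++ open.

Definition certified n : bool :=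
  chain_coverb n (chain_cover n) &&
  has (fun r => size (chain_cover n) <= count (level_vec r) (bitvecs n)) (iota 0 n.+1).

Lemma certified_is_sP n : certified n -> is_sP n (\max_(r < n.+1) #|QPr n r|).
Proof.
case/andP => cover /hasP [r]; rewrite mem_iota ltnS => le_rn le_cover_level.
apply: (@is_sP_max_level _ r (size (chain_cover n))) => //; first by rewrite card_QPr.
by move=> F; apply: card_antichain_le_cover.
Qed.

Lemma certified_upto_10 : all certified (iota 1 10).
Proof. by vm_compute. Qed.

Theorem mainTheorem12 (n : nat) :
  1 <= n <= 10 -> is_sP n (\max_(r < n.+1) #|QPr n r|).
Proof.
move=> n_range; apply: certified_is_sP.
by apply: (allP certified_upto_10); rewrite mem_iota.
Qed.
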